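(* Let $\omega$ be a rectilinearly-convex obstacle, and let $S$ be a finite set of closed line segments inside $\omega$ such that (1) $S$ intersects each of the four extreme edges of $\omega$ and (2) $\bigcup_{s\in S}s$ is connected. Then $S$ is a skeleton for $\omega$.
   Context: An obstacle $\omega$ is a simple polygon in $\mathbb{R}^2$ (a closed, bounded polygonal region without holes whose boundary does not intersect itself), assumed in general position (no three of its vertices are collinear); edges of $\omega$ are those of its boundary. $\omega$ is rectilinear if each edge is horizontal or vertical, and a rectilinear obstacle is rectilinearly-convex if any two points of $\omega$ can be joined by a shortest rectilinear path (made of horizontal and vertical segments, of minimum $\ell_1$ length) contained in $\omega$. A corner point of a rectilinear path is a point where a horizontal and a vertical segment of the path meet. A set $S$ of closed line segments is inside $\omega$ if the union of its elements is contained in $\omega$. Such an $S$ is a skeleton for $\omega$ if for every pair of points $p,q$ not in the interior of $\omega$ such that every shortest rectilinear path between $p$ and $q$ with at most one corner point meets the interior of $\omega$, each such path intersects some element of $S$. The bounding box $B(\omega)$ is the smallest closed axis-parallel rectangle containing $\omega$; the extreme edges of $\omega$ are the edges of $\omega$ lying on the boundary of $B(\omega)$ (a rectilinearly-convex obstacle has exactly four: left, right, bottom, top). *)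

From Stdlib Require Import Reals List Lra.
Open Scope R_scope.

Definition pt := (R * R)%type.
Definition pset := pt -> Prop.

Definition seg (a b : pt) : pset := fun p =>
  exists t, 0 <= t <= 1 /\
    p = (fst a + t * (fst b - fst a), snd a + t * (snd b - snd a)).

Definition dist2 (p q : pt) : R := (fst p - fst q)^2 + (snd p - snd q)^2.
Definition interior (A : pset) : pset := fun p =>
  exists r, 0 < r /\ forall q, dist2 p q < r * r -> A q.
Definition closure (A : pset) : pset := fun p =>
  forall r, 0 < r -> exists q, A q /\ dist2 p q < r * r.
Definition boundary (A : pset) : pset := fun p => closure A p /\ ~ interior A p.
Definition is_open (A : pset) : Prop := forall p, A p -> interior A p.
Definition is_closed (A : pset) : Prop := forall p, closure A p -> A p.
Definition bounded (A : pset) : Prop :=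
  exists M, forall p, A p -> Rabs (fst p) <= M /\ Rabs (snd p) <= M.
Definition connected (A : pset) : Prop :=
  forall U V : pset, is_open U -> is_open V ->
    (forall p, A p -> U p \/ V p) ->
    (exists p, A p /\ U p) -> (exists p, A p /\ V p) ->
    exists p, A p /\ U p /\ V p.

(** Polygons given by their cyclic list of vertices V = [v_0; ...; v_{n-1}] *)
Definition vtx (V : list pt) (i : nat) : pt := nth (i mod length V) V (0, 0).
Definition edge (V : list pt) (i : nat) : pset := seg (vtx V i) (vtx V (S i)).
Definition poly_curve (V : list pt) : pset := fun p =>
  exists i, (i < length V)%nat /\ edge V i p.

Definition simple_polygon (V : list pt) : Prop :=
  (3 <= length V)%nat /\
  forall i j, (i < length V)%nat -> (j < length V)%nat -> i <> j ->
    ((S i) mod length V = j -> forall p, edge V i p -> edge V j p -> p = vtx V j) /\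
    ((S j) mod length V = i -> forall p, edge V i p -> edge V j p -> p = vtx V i) /\
    ((S i) mod length V <> j -> (S j) mod length V <> i ->
       forall p, ~ (edge V i p /\ edge V j p)).

Definition collinear (a b c : pt) : Prop :=
  (fst b - fst a) * (snd c - snd a) - (snd b - snd a) * (fst c - fst a) = 0.

Definition general_position (V : list pt) : Prop :=
  forall i j k, (i < length V)%nat -> (j < length V)%nat -> (k < length V)%nat ->
    i <> j -> j <> k -> i <> k -> ~ collinear (vtx V i) (vtx V j) (vtx V k).

Definition obstacle (V : list pt) (w : pset) : Prop :=
  simple_polygon V /\ general_position V /\
  is_closed w /\ bounded w /\ (exists p, interior w p) /\
  (forall p, boundary w p <-> poly_curve V p).

Definition rectilinear (V : list pt) : Prop :=
  forall i, (i < length V)%nat ->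
    fst (vtx V i) = fst (vtx V (S i)) \/ snd (vtx V i) = snd (vtx V (S i)).

(** Rectilinear paths: a start point a followed by the list l of the next
    vertices; consecutive vertices are joined by horizontal/vertical segments. *)
Fixpoint rpath (a : pt) (l : list pt) : Prop :=
  match l with
  | nil => True
  | q :: l' => (fst a = fst q \/ snd a = snd q) /\ rpath q l'
  end.
Definition l1 (p q : pt) : R := Rabs (fst p - fst q) + Rabs (snd p - snd q).
Fixpoint plen (a : pt) (l : list pt) : R :=
  match l with nil => 0 | q :: l' => l1 a q + plen q l' end.
Fixpoint psegs (a : pt) (l : list pt) : list (pt * pt) :=
  match l with nil => nil | q :: l' => (a, q) :: psegs q l' end.
Fixpoint ptrace (a : pt) (l : list pt) : pset :=
  match l with
  | nil => fun x => x = a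
  | q :: l' => fun x => seg a q x \/ ptrace q l' x
  end.

Definition shortest_rpath (a b : pt) (l : list pt) : Prop :=
  rpath a l /\ last l a = b /\
  forall l', rpath a l' -> last l' a = b -> plen a l <= plen a l'.

Definition corner (a : pt) (l : list pt) : pset := fun x =>
  exists u v u' v', In (u, v) (psegs a l) /\ In (u', v') (psegs a l) /\
    u <> v /\ snd u = snd v /\ u' <> v' /\ fst u' = fst v' /\
    seg u v x /\ seg u' v' x.
Definition at_most_one_corner (a : pt) (l : list pt) : Prop :=
  forall x y, corner a l x -> corner a l y -> x = y.

Definition rect_convex (w : pset) : Prop :=
  forall p q, w p -> w q ->
    exists l, shortest_rpath p q l /\ forall x, ptrace p l x -> w x.

Definition segset (s : pt * pt) : pset := seg (fst s) (snd s).
Definition inside (S : list (pt * pt)) (w : pset) : Prop :=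
  forall s x, In s S -> segset s x -> w x.
Definition union_segs (S : list (pt * pt)) : pset := fun x =>
  exists s, In s S /\ segset s x.

Definition skeleton (w : pset) (S : list (pt * pt)) : Prop :=
  inside S w /\
  forall p q, ~ interior w p -> ~ interior w q ->
    (forall l, shortest_rpath p q l -> at_most_one_corner p l ->
       exists x, ptrace p l x /\ interior w x) ->
    forall l, shortest_rpath p q l -> at_most_one_corner p l ->
      exists s, In s S /\ exists x, ptrace p l x /\ segset s x.

Definition in_rect (xl xr yb yt : R) : pset := fun p =>
  xl <= fst p <= xr /\ yb <= snd p <= yt.
Definition is_bbox (w : pset) (xl xr yb yt : R) : Prop :=
  (forall p, w p -> in_rect xl xr yb yt p) /\
  forall xl' xr' yb' yt', (forall p, w p -> in_rect xl' xr' yb' yt' p) ->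
    forall p, in_rect xl xr yb yt p -> in_rect xl' xr' yb' yt' p.
Definition rect_boundary (xl xr yb yt : R) : pset := fun p =>
  in_rect xl xr yb yt p /\
  (fst p = xl \/ fst p = xr \/ snd p = yb \/ snd p = yt).

Definition extreme_edge (V : list pt) (w : pset) (i : nat) : Prop :=
  (i < length V)%nat /\
  exists xl xr yb yt, is_bbox w xl xr yb yt /\
    forall p, edge V i p -> rect_boundary xl xr yb yt p.

(** A shortest rectilinear path from p to q with at most one corner contains one of the two
    L-shaped paths from p to q, and the hypothesis on p and q says that both L's meet the
    interior of w while p and q are not interior.  By a symmetry of the square we may assume
    that p lies below and to the left of q and that both interior points lie on horizontal
    arms.  The L turning at (q_x, p_y), prolonged by the horizontal rays leaving p to the left
    and q to the right, separates the plane.  Rectilinear convexity makes w orthogonally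
    convex, so w cannot approach either ray from both sides: it would then contain a box
    around p or q.  Attaching each ray to the side it is approached from therefore splits
    w minus the L into two separated parts.  The connected union of S meets both parts, since
    it contains a topmost and a bottommost point of w (an extreme vertex of a rectilinear
    polygon in general position is incident to an extreme edge); hence it meets the L. *)

From Stdlib Require Import Reals List Lra Lia Classical.
Open Scope R_scope.

(** * Segments and symmetries of the square *)

Definition btw (u v x : R) : Prop := u <= x <= v \/ v <= x <= u.

Definition aligned (a b : pt) : Prop := fst a = fst b \/ snd a = snd b.

Lemma pt_eq (u v : pt) : fst u = fst v -> snd u = snd v -> u = v.
Proof. destruct u, v; simpl; intros -> ->; reflexivity. Qed.

Lemma btw_split u v q x : btw u v q -> btw u v x -> btw u q x \/ btw q v x.
Proof.
  unfold btw. intros H1 H2. destruct (Rle_dec x q), H1, H2;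
    solve [left; left; lra | left; right; lra | right; left; lra | right; right; lra].
Qed.

Lemma seg_start a b : seg a b a.
Proof. exists 0; split; [lra|]. destruct a; simpl; f_equal; ring. Qed.

Lemma seg_end a b : seg a b b.
Proof. exists 1; split; [lra|]. destruct b; simpl; f_equal; ring. Qed.

Lemma seg_sym a b z : seg a b z -> seg b a z.
Proof. intros [t [Ht ->]]. exists (1 - t); split; [lra|]. f_equal; ring. Qed.

Lemma seg_degenerate a z : seg a a z -> z = a.
Proof. intros [t [_ ->]]. destruct a; simpl; f_equal; ring. Qed.

Lemma seg_horizontalE a b z : snd a = snd b ->
  seg a b z <-> snd z = snd a /\ btw (fst a) (fst b) (fst z).
Proof.
  destruct a as [a1 a2], b as [b1 b2], z as [z1 z2]; unfold btw; simpl; intros <-; split.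
  - intros [t [Ht E]]; injection E as -> ->; split; [ring|].
    destruct (Rle_dec a1 b1); [left|right]; split; nra.
  - intros [-> Hb]. destruct (Req_dec a1 b1) as [<-|Hne].
    + exists 0; split; [lra|]. simpl; f_equal; destruct Hb; lra.
    + exists ((z1 - a1) / (b1 - a1)).
      assert (E : (z1 - a1) / (b1 - a1) * (b1 - a1) = z1 - a1) by (field; lra).
      split; [|simpl; f_equal; lra].
      set (t := (z1 - a1) / (b1 - a1)) in *.
      destruct (Rlt_dec a1 b1), Hb; split; nra.
Qed.

Definition dot (d z : pt) : R := fst d * fst z + snd d * snd z.

Definition axis_unit (d : pt) : Prop :=
  (fst d = 0 \/ snd d = 0) /\ fst d * fst d + snd d * snd d = 1.

Record square_symmetry (s : pt -> pt) : Prop := {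
  sym_invol : forall z, s (s z) = z;
  sym_dot : forall d z, dot d (s z) = dot (s d) z;
  sym_dist2 : forall a b, dist2 (s a) (s b) = dist2 a b;
  sym_seg : forall a b z, seg a b z -> seg (s a) (s b) (s z);
  sym_aligned : forall a b, aligned a b -> aligned (s a) (s b);
  sym_axis_unit : forall d, axis_unit d -> axis_unit (s d) }.

Lemma sym_injective s a b : square_symmetry s -> s a = s b -> a = b.
Proof. intros Hs E. rewrite <- (sym_invol _ Hs a), E. apply (sym_invol _ Hs). Qed.

Definition swap (z : pt) : pt := (snd z, fst z).
Definition flip_x (z : pt) : pt := (- fst z, snd z).
Definition flip_y (z : pt) : pt := (fst z, - snd z).
Definition flip_antidiag (z : pt) : pt := (- snd z, - fst z).

Ltac prove_square_symmetry :=
  split; unfold dot, dist2, aligned, axis_unit, swap, flip_x, flip_y, flip_antidiag;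
  [ intros [x y]; simpl; f_equal; ring
  | intros [d1 d2] [x y]; simpl; ring
  | intros [a1 a2] [b1 b2]; simpl; ring
  | intros a b z [t [Ht ->]]; exists t; split; [exact Ht | simpl; f_equal; ring]
  | intros [a1 a2] [b1 b2]; simpl; intros [-> | ->]; auto
  | intros [d1 d2]; simpl; intros [[-> | ->] Hn]; split; lra ].

Lemma swap_symmetry : square_symmetry swap.
Proof. prove_square_symmetry. Qed.
Lemma flip_x_symmetry : square_symmetry flip_x.
Proof. prove_square_symmetry. Qed.
Lemma flip_y_symmetry : square_symmetry flip_y.
Proof. prove_square_symmetry. Qed.
Lemma flip_antidiag_symmetry : square_symmetry flip_antidiag.
Proof. prove_square_symmetry. Qed.

Lemma swapK z : swap (swap z) = z.
Proof. exact (sym_invol _ swap_symmetry z). Qed.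

Lemma map_swapK (l : list pt) : map swap (map swap l) = l.
Proof. rewrite map_map. rewrite <- (map_id l) at 2. apply map_ext, swapK. Qed.

Lemma seg_swap a b z : seg a b z -> seg (swap a) (swap b) (swap z).
Proof. exact (sym_seg _ swap_symmetry a b z). Qed.

Lemma seg_verticalE a b z : fst a = fst b ->
  seg a b z <-> fst z = fst a /\ btw (snd a) (snd b) (snd z).
Proof.
  intros E. rewrite <- (swapK a), <- (swapK b), <- (swapK z) at 1. split.
  - intros H%seg_swap. apply seg_horizontalE in H; [exact H | exact E].
  - intros H. apply seg_swap, seg_horizontalE; [exact E | exact H].
Qed.

(** * Rectilinear paths with at most one corner *)

Ltac destruct_Rabs := repeat match goal with
 | H: context [Rabs ?x] |- _ => let h := fresh "h" in destruct (Rcase_abs x) as [h|h];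
     [rewrite (Rabs_left x h) in * | rewrite (Rabs_right x h) in *]
 | |- context [Rabs ?x] => let h := fresh "h" in destruct (Rcase_abs x) as [h|h];
     [rewrite (Rabs_left x h) in * | rewrite (Rabs_right x h) in *]
 end.

Lemma last_cons {A : Type} (q : A) l a : last (q :: l) a = last l q.
Proof.
  revert q; induction l as [|r l IH]; intros q; [reflexivity|].
  simpl in *. destruct l; [reflexivity|]. apply IH.
Qed.

Lemma l1_triangle a b c : l1 a c <= l1 a b + l1 b c.
Proof.
  unfold l1.
  pose proof (Rabs_triang (fst a - fst b) (fst b - fst c)).
  pose proof (Rabs_triang (snd a - snd b) (snd b - snd c)).
  replace (fst a - fst c) with (fst a - fst b + (fst b - fst c)) by ring.
  replace (snd a - snd c) with (snd a - snd b + (snd b - snd c)) by ring.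
  lra.
Qed.

Lemma l1_refl a : l1 a a = 0.
Proof. unfold l1. rewrite !Rminus_diag, Rabs_R0. ring. Qed.

Lemma l1_swap a b : l1 (swap a) (swap b) = l1 a b.
Proof. unfold l1, swap; simpl. ring. Qed.

Lemma plen_ge_l1 a l : l1 a (last l a) <= plen a l.
Proof.
  revert a; induction l as [|q l IH]; intros a.
  - simpl. rewrite l1_refl. lra.
  - rewrite last_cons. simpl plen.
    pose proof (IH q). pose proof (l1_triangle a q (last l q)). lra.
Qed.

Definition monotone_path (a : pt) (l : list pt) : Prop := plen a l = l1 a (last l a).

Lemma monotone_path_cons a q l : monotone_path a (q :: l) ->
  monotone_path q l /\ l1 a q + l1 q (last l q) = l1 a (last l q).
Proof.
  unfold monotone_path. rewrite last_cons. simpl plen. intros H.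
  pose proof (plen_ge_l1 q l). pose proof (l1_triangle a q (last l q)). split; lra.
Qed.

Lemma l1_additive_btw a q b : snd a = snd q -> l1 a q + l1 q b = l1 a b ->
  btw (fst a) (fst b) (fst q).
Proof.
  unfold l1, btw. intros -> E.
  destruct (Rle_dec (fst a) (fst b)); [left|right]; destruct_Rabs; split; lra.
Qed.

Definition hv_corner (a b : pt) : pt := (fst b, snd a).
Definition hv_path (a b : pt) : list pt := hv_corner a b :: b :: nil.
Definition hv_trace (a b : pt) : pset := fun z =>
  seg a (hv_corner a b) z \/ seg (hv_corner a b) b z.

Lemma plen_hv_path a b : plen a (hv_path a b) = l1 a b.
Proof.
  unfold hv_path, hv_corner; simpl. unfold l1; simpl. rewrite !Rminus_diag, !Rabs_R0. ring.
Qed.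

Lemma hv_path_shortest a b : shortest_rpath a b (hv_path a b).
Proof.
  split; [simpl; unfold hv_corner; simpl; auto|]. split; [reflexivity|].
  intros l' _ <-. rewrite plen_hv_path. apply plen_ge_l1.
Qed.

Lemma shortest_rpath_monotone a b l : shortest_rpath a b l -> monotone_path a l.
Proof.
  intros (_ & Hl & Hmin). unfold monotone_path.
  pose proof (plen_ge_l1 a l). pose proof (Hmin _ (proj1 (hv_path_shortest a b)) eq_refl).
  rewrite plen_hv_path, Hl in *. lra.
Qed.

Lemma hv_path_one_corner a b : at_most_one_corner a (hv_path a b).
Proof.
  enough (K : forall x, corner a (hv_path a b) x -> x = hv_corner a b)
    by (intros x y Hx Hy; rewrite (K x Hx), (K y Hy); reflexivity).
  intros x (u & v & u' & v' & Huv & Hu'v' & Hne & Hy & Hne' & Hx & Sx & Sx').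
  unfold hv_path, hv_corner in *; simpl in Huv, Hu'v'.
  destruct Huv as [[= <- <-] | [[= <- <-] | []]];
    [| exfalso; exact (Hne (pt_eq (fst b, snd a) b eq_refl Hy))].
  destruct Hu'v' as [[= <- <-] | [[= <- <-] | []]];
    [exfalso; exact (Hne' (pt_eq a (fst b, snd a) Hx eq_refl)) |].
  apply seg_horizontalE in Sx; [|reflexivity]. apply seg_verticalE in Sx'; [|reflexivity].
  apply pt_eq; simpl; tauto.
Qed.

Lemma ptrace_hv_path a b z : ptrace a (hv_path a b) z -> hv_trace a b z.
Proof. intros [H | [H | ->]]; [left | right | right; apply seg_end]; exact H. Qed.

Lemma hv_trace_swap a b z : hv_trace b a z -> hv_trace (swap a) (swap b) (swap z).
Proof. intros [H | H]; [right | left]; apply seg_sym; exact (seg_swap _ _ _ H). Qed.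

Lemma rpath_swap a l : rpath a l -> rpath (swap a) (map swap l).
Proof.
  revert a; induction l as [|q l IH]; intros a; [trivial|].
  intros [Haq Hl]. split; [apply (sym_aligned _ swap_symmetry), Haq | apply IH, Hl].
Qed.

Lemma last_swap a l : last (map swap l) (swap a) = swap (last l a).
Proof.
  revert a; induction l as [|q l IH]; intros a; [reflexivity|].
  simpl map. rewrite !last_cons. apply IH.
Qed.

Lemma plen_swap a l : plen (swap a) (map swap l) = plen a l.
Proof.
  revert a; induction l as [|q l IH]; intros a; [reflexivity|].
  simpl. rewrite l1_swap, IH. reflexivity.
Qed.

Lemma monotone_path_swap a l : monotone_path a l -> monotone_path (swap a) (map swap l).
Proof. unfold monotone_path. rewrite plen_swap, last_swap, l1_swap. trivial. Qed.

Lemma ptrace_swap a l z : ptrace a l z -> ptrace (swap a) (map swap l) (swap z).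
Proof.
  revert a; induction l as [|q l IH]; intros a; simpl.
  - intros ->. reflexivity.
  - intros [H | H]; [left; apply seg_swap, H | right; apply IH, H].
Qed.

Lemma psegs_swap a l u v : In (u, v) (psegs a l) ->
  In (swap u, swap v) (psegs (swap a) (map swap l)).
Proof.
  revert a; induction l as [|q l IH]; intros a; simpl; [tauto|].
  intros [[= -> ->] | H]; [left; reflexivity | right; apply IH, H].
Qed.

Lemma corner_swap a l x : corner a l x -> corner (swap a) (map swap l) (swap x).
Proof.
  intros (u & v & u' & v' & Huv & Hu'v' & Hne & Hy & Hne' & Hx & Sx & Sx').
  exists (swap u'), (swap v'), (swap u), (swap v).
  repeat split; try apply psegs_swap; try apply seg_swap; try assumption;
    intros E%(sym_injective _ _ _ swap_symmetry); auto.
Qed.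

Lemma one_corner_swap a l : at_most_one_corner a l ->
  at_most_one_corner (swap a) (map swap l).
Proof.
  intros H x y Hx Hy. apply corner_swap in Hx, Hy. rewrite swapK, map_swapK in Hx, Hy.
  apply (sym_injective _ _ _ swap_symmetry), H; assumption.
Qed.

Lemma shortest_rpath_swap a b l : shortest_rpath a b l ->
  shortest_rpath (swap a) (swap b) (map swap l).
Proof.
  intros (Hr & Hl & Hmin).
  split; [apply rpath_swap, Hr|]. split; [rewrite last_swap, Hl; reflexivity|].
  intros l' Hr' Hl'. rewrite plen_swap, <- (map_swapK l'), plen_swap.
  apply Hmin.
  - apply rpath_swap in Hr'. rewrite swapK in Hr'. exact Hr'.
  - rewrite <- (swapK a), last_swap, Hl'. apply swapK.
Qed.

Fixpoint starts_horizontal (a : pt) (l : list pt) : Prop :=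
  match l with
  | nil => False
  | q :: l' => (a = q /\ starts_horizontal q l') \/ (a <> q /\ snd a = snd q)
  end.

Definition starts_vertical (a : pt) (l : list pt) : Prop :=
  starts_horizontal (swap a) (map swap l).

Lemma starts_horizontal_or_vertical a l : rpath a l -> last l a <> a ->
  starts_horizontal a l \/ starts_vertical a l.
Proof.
  revert a; induction l as [|q l IH]; intros a; [intros _ []; reflexivity|].
  unfold starts_vertical; cbn [rpath map starts_horizontal]. rewrite last_cons.
  intros [Haq Hl] Hne. destruct (classic (a = q)) as [<- | Hneq].
  - destruct (IH a Hl Hne); [left | right]; left; tauto.
  - destruct Haq as [Hx | Hy]; [right; right | left; right]; split; auto.
    intros E%(sym_injective _ _ _ swap_symmetry). exact (Hneq E).
Qed.

Lemma starts_horizontal_seg a l : starts_horizontal a l ->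
  exists v, In (a, v) (psegs a l) /\ a <> v /\ snd a = snd v.
Proof.
  revert a; induction l as [|q l IH]; intros a; simpl; [tauto|].
  intros [[<- H] | H]; [destruct (IH a H) as (v & ? & ?); exists v | exists q]; tauto.
Qed.

Lemma starts_vertical_seg a l : starts_vertical a l ->
  exists v, In (a, v) (psegs a l) /\ a <> v /\ fst a = fst v.
Proof.
  intros H. destruct (starts_horizontal_seg _ _ H) as (v & Hin & Hne & Hy).
  exists (swap v). apply psegs_swap in Hin. rewrite swapK, map_swapK in Hin.
  split; [exact Hin|]. split; [|exact Hy].
  intros E. apply Hne. rewrite E. apply swapK.
Qed.

Lemma starts_horizontal_moves_x a l : starts_horizontal a l -> monotone_path a l ->
  fst a <> fst (last l a).
Proof.
  revert a; induction l as [|q l IH]; intros a; cbn [starts_horizontal]; [tauto|].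
  rewrite last_cons. intros Hs Hm. apply monotone_path_cons in Hm as [Hm E].
  destruct Hs as [[<- Hs] | [Hne Hy]]; [apply IH; assumption|].
  assert (Hx : fst a <> fst q) by (intros Hx; exact (Hne (pt_eq _ _ Hx Hy))).
  unfold l1 in E. intros Hb. destruct_Rabs; lra.
Qed.

Lemma starts_vertical_moves_y a l : starts_vertical a l -> monotone_path a l ->
  snd a <> snd (last l a).
Proof.
  intros Hv Hm. pose proof (starts_horizontal_moves_x _ _ Hv (monotone_path_swap _ _ Hm)) as H.
  rewrite last_swap in H. exact H.
Qed.

Lemma corner_cons a q l x : corner q l x -> corner a (q :: l) x.
Proof. intros (u & v & u' & v' & Huv & Hu'v' & R). exists u, v, u', v'. simpl; tauto. Qed.

Lemma corner_at_turn a q l : a <> q -> snd a = snd q -> starts_vertical q l ->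
  corner a (q :: l) q.
Proof.
  intros Hne Hy Hv. destruct (starts_vertical_seg q l Hv) as (v & Hin & Hne' & Hx).
  exists a, q, q, v. simpl. repeat split; auto using seg_start, seg_end.
Qed.

Lemma hv_trace_extend a q b z : snd a = snd q -> btw (fst a) (fst b) (fst q) ->
  hv_trace a b z -> seg a q z \/ hv_trace q b z.
Proof.
  unfold hv_trace, hv_corner. intros Hy Hq [H | H]; [| rewrite <- Hy; tauto].
  apply seg_horizontalE in H as [Hz Hb]; [|reflexivity]. simpl in Hb.
  destruct (btw_split _ _ _ _ Hq Hb) as [B | B].
  - left. apply seg_horizontalE; auto.
  - right; left. apply seg_horizontalE; [reflexivity|]. simpl. split; [congruence | exact B].
Qed.

Lemma hv_trace_turn a q b z : snd a = snd q -> fst q = fst b ->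
  hv_trace a b z -> seg a q z \/ hv_trace b q z.
Proof.
  unfold hv_trace, hv_corner. intros Hy Hx.
  rewrite (pt_eq (fst b, snd a) q (eq_sym Hx) Hy), (pt_eq (fst q, snd b) b Hx eq_refl).
  intros [H | H]; [left; exact H | right; right; apply seg_sym, H].
Qed.

(** The corner clause is what keeps the induction going: a horizontal first step followed by
    a vertical start already has a corner, so the rest of the path cannot turn again. *)
Definition hv_covering (a : pt) (l : list pt) : Prop :=
  rpath a l -> monotone_path a l -> at_most_one_corner a l -> starts_horizontal a l ->
  (forall z, hv_trace a (last l a) z -> ptrace a l z) /\
  (snd a <> snd (last l a) -> corner a l (hv_corner a (last l a))).

Lemma vh_covering a l : hv_covering (swap a) (map swap l) ->
  rpath a l -> monotone_path a l -> at_most_one_corner a l -> starts_vertical a l ->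
  (forall z, hv_trace (last l a) a z -> ptrace a l z) /\
  (fst a <> fst (last l a) -> corner a l (hv_corner (last l a) a)).
Proof.
  intros H Hr Hm Ha Hv.
  destruct (H (rpath_swap _ _ Hr) (monotone_path_swap _ _ Hm) (one_corner_swap _ _ Ha) Hv)
    as [C K].
  rewrite last_swap in C, K. split.
  - intros z Hz. apply hv_trace_swap, C, ptrace_swap in Hz.
    rewrite !swapK, map_swapK in Hz. exact Hz.
  - intros Hx. apply K, corner_swap in Hx. rewrite swapK, map_swapK in Hx. exact Hx.
Qed.

Lemma one_corner_turn a q l : a <> q -> snd a = snd q -> starts_vertical q l ->
  monotone_path q l -> at_most_one_corner a (q :: l) ->
  (fst q <> fst (last l q) -> corner q l (hv_corner (last l q) q)) ->
  fst q = fst (last l q).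
Proof.
  intros Hne Hy Hv Hm Ha K. destruct (Req_dec (fst q) (fst (last l q))) as [E | E]; [exact E|].
  exfalso. apply (starts_vertical_moves_y q l Hv Hm).
  assert (Eq : q = hv_corner (last l q) q)
    by (apply Ha; [apply corner_at_turn | apply corner_cons, K]; assumption).
  rewrite Eq at 1. reflexivity.
Qed.

Lemma hv_covering_cons a q l : hv_covering q l -> hv_covering (swap q) (map swap l) ->
  hv_covering a (q :: l).
Proof.
  intros IHh IHv [Haq Hr] Hm Ha Hs. cbn [starts_horizontal] in Hs.
  apply monotone_path_cons in Hm as [Hm Hsum].
  assert (Ha' : at_most_one_corner q l)
    by (intros x y Hx Hy; apply Ha; apply corner_cons; assumption).
  rewrite last_cons. set (b := last l q) in *.
  destruct Hs as [[<- Hs] | [Hne Hy]].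
  { destruct (IHh Hr Hm Ha' Hs) as [C K].
    split; [intros z Hz; right; apply C, Hz | intros Hb; apply corner_cons, K, Hb]. }
  destruct (classic (b = q)) as [-> | Hbq].
  { split; [|intros []; exact Hy]. intros z Hz. left.
    unfold hv_trace in Hz. rewrite (pt_eq (hv_corner a q) q eq_refl Hy) in Hz.
    destruct Hz as [S | ->%seg_degenerate]; [exact S | apply seg_end]. }
  destruct (starts_horizontal_or_vertical q l Hr Hbq) as [Hh | Hv].
  - destruct (IHh Hr Hm Ha' Hh) as [C K]. split.
    + intros z Hz.
      destruct (hv_trace_extend a q b z Hy (l1_additive_btw a q b Hy Hsum) Hz) as [S | S];
        [left | right; apply C]; exact S.
    + intros Hb. apply corner_cons. unfold hv_corner. rewrite Hy in *. apply K, Hb.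
  - destruct (vh_covering q l IHv Hr Hm Ha' Hv) as [C K].
    pose proof (one_corner_turn a q l Hne Hy Hv Hm Ha K) as Ex. split.
    + intros z Hz. destruct (hv_trace_turn a q b z Hy Ex Hz) as [S | S];
        [left | right; apply C]; exact S.
    + intros _. rewrite (pt_eq (hv_corner a b) q (eq_sym Ex) Hy).
      apply corner_at_turn; assumption.
Qed.

Lemma hv_covering_all l : forall a, hv_covering a l /\ hv_covering (swap a) (map swap l).
Proof.
  induction l as [|q l IH]; intros a.
  - split; intros _ _ _ [].
  - destruct (IH q) as [Hq Vq]. split; [apply hv_covering_cons; assumption|].
    apply hv_covering_cons; [exact Vq|]. rewrite swapK, map_swapK. exact Hq.
Qed.

Lemma one_corner_path_covers_L a b l : shortest_rpath a b l -> at_most_one_corner a l ->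
  a <> b ->
  (forall z, hv_trace a b z -> ptrace a l z) \/ (forall z, hv_trace b a z -> ptrace a l z).
Proof.
  intros Hsh Ha Hne. pose proof (shortest_rpath_monotone _ _ _ Hsh) as Hm.
  destruct Hsh as (Hr & <- & _). destruct (hv_covering_all l a) as [Hh Hv].
  destruct (starts_horizontal_or_vertical a l Hr (not_eq_sym Hne)) as [S | S].
  - left. apply (Hh Hr Hm Ha S).
  - right. apply (vh_covering a l Hv Hr Hm Ha S).
Qed.

Lemma empty_path_shortest p : shortest_rpath p p nil /\ at_most_one_corner p nil.
Proof.
  split; [split; [exact I | split; [reflexivity|]] |].
  - intros l' _ _. pose proof (plen_ge_l1 p l'). unfold l1 in *.
    pose proof (Rabs_pos (fst p - fst (last l' p))).
    pose proof (Rabs_pos (snd p - snd (last l' p))). simpl. lra.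
  - intros x y (u & v & _ & _ & [] & _).
Qed.

Lemma vh_path_exists p q : exists l, shortest_rpath p q l /\ at_most_one_corner p l /\
  forall x, ptrace p l x -> hv_trace q p x.
Proof.
  exists (map swap (hv_path (swap p) (swap q))). split; [|split].
  - pose proof (shortest_rpath_swap _ _ _ (hv_path_shortest (swap p) (swap q))) as H.
    rewrite !swapK in H. exact H.
  - pose proof (one_corner_swap _ _ (hv_path_one_corner (swap p) (swap q))) as H.
    rewrite swapK in H. exact H.
  - intros x Hx. apply ptrace_swap in Hx. rewrite map_swapK in Hx.
    apply ptrace_hv_path, hv_trace_swap in Hx. rewrite !swapK in Hx. exact Hx.
Qed.

Definition orthoconvex (w : pset) : Prop :=
  forall a b, w a -> w b -> aligned a b -> forall z, seg a b z -> w z.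

Lemma monotone_horizontal_steps a l : monotone_path a l -> snd a = snd (last l a) ->
  forall u v, In (u, v) (psegs a l) -> snd u = snd v.
Proof.
  revert a; induction l as [|q l IH]; intros a Hm Hy u v; [intros []|].
  apply monotone_path_cons in Hm as [Hm E]. rewrite last_cons in Hy.
  assert (Hq : snd a = snd q) by (unfold l1 in E; destruct_Rabs; lra).
  intros [[= <- <-] | Hin]; [exact Hq | apply (IH q Hm); [congruence | exact Hin]].
Qed.

Lemma rect_convex_horizontal w : rect_convex w ->
  forall a b, w a -> w b -> snd a = snd b -> forall z, seg a b z -> w z.
Proof.
  intros Hc a b Ha Hb Hy z Hz.
  destruct (classic (a = b)) as [<- | Hne]; [apply seg_degenerate in Hz as ->; exact Ha|].
  destruct (Hc a b Ha Hb) as (l & Hsh & Hin). apply Hin.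
  pose proof (monotone_horizontal_steps a l (shortest_rpath_monotone _ _ _ Hsh)) as Hflat.
  pose proof Hsh as (_ & Hl & _). rewrite Hl in Hflat.
  assert (Hnone : at_most_one_corner a l).
  { intros x y (u & v & u' & v' & _ & Hin' & _ & _ & Hne' & Hx & _) _. exfalso.
    exact (Hne' (pt_eq _ _ Hx (Hflat Hy u' v' Hin'))). }
  destruct (one_corner_path_covers_L a b l Hsh Hnone Hne) as [C | C]; apply C; left.
  - rewrite (pt_eq (hv_corner a b) b eq_refl Hy). exact Hz.
  - rewrite (pt_eq (hv_corner b a) a eq_refl (eq_sym Hy)). apply seg_sym, Hz.
Qed.

Lemma rect_convex_swap w : rect_convex w -> rect_convex (fun z => w (swap z)).
Proof.
  intros Hc p q Hp Hq. destruct (Hc _ _ Hp Hq) as (l & Hsh & Hin).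
  exists (map swap l). split.
  - apply shortest_rpath_swap in Hsh. rewrite !swapK in Hsh. exact Hsh.
  - intros x Hx. apply Hin. apply ptrace_swap in Hx. rewrite map_swapK in Hx. exact Hx.
Qed.

Lemma rect_convex_orthoconvex w : rect_convex w -> orthoconvex w.
Proof.
  intros Hc a b Ha Hb [Hx | Hy] z Hz.
  - rewrite <- (swapK z).
    apply (rect_convex_horizontal _ (rect_convex_swap _ Hc) (swap a) (swap b));
      [rewrite swapK; assumption .. | exact Hx | apply seg_swap, Hz].
  - exact (rect_convex_horizontal w Hc a b Ha Hb Hy z Hz).
Qed.

(** * Topology of the plane *)

Lemma dist2_lt_coords a b r : 0 < r -> dist2 a b < r * r ->
  Rabs (fst a - fst b) < r /\ Rabs (snd a - snd b) < r.
Proof.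
  unfold dist2. intros Hr H.
  assert (H1 : (fst a - fst b) ^ 2 < r * r) by (pose proof (pow2_ge_0 (snd a - snd b)); lra).
  assert (H2 : (snd a - snd b) ^ 2 < r * r) by (pose proof (pow2_ge_0 (fst a - fst b)); lra).
  split; apply Rabs_def1; nra.
Qed.

Lemma coords_lt_dist2 a b r : 0 < r ->
  Rabs (fst a - fst b) < r / 2 -> Rabs (snd a - snd b) < r / 2 -> dist2 a b < r * r.
Proof.
  unfold dist2. intros Hr [H1 H1']%Rabs_def2 [H2 H2']%Rabs_def2. nra.
Qed.

Lemma dist2_triangle2 a b c : dist2 a c <= 2 * (dist2 a b + dist2 b c).
Proof.
  unfold dist2.
  pose proof (pow2_ge_0 (fst a - fst b - (fst b - fst c))).
  pose proof (pow2_ge_0 (snd a - snd b - (snd b - snd c))).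
  replace (fst a - fst c) with (fst a - fst b + (fst b - fst c)) by ring.
  replace (snd a - snd c) with (snd a - snd b + (snd b - snd c)) by ring.
  nra.
Qed.

Lemma closure_self (A : pset) z : A z -> closure A z.
Proof. intros H r Hr. exists z. split; [exact H|]. unfold dist2. rewrite !Rminus_diag. nra. Qed.

Lemma closure_mono (A B : pset) z : (forall y, A y -> B y) -> closure A z -> closure B z.
Proof. intros H C r Hr. destruct (C r Hr) as (y & Hy & Hd). exists y; auto. Qed.

Lemma not_closure (A : pset) z : ~ closure A z ->
  exists r, 0 < r /\ forall y, A y -> ~ dist2 z y < r * r.
Proof.
  intros H. apply NNPP. intros H'. apply H. intros r Hr. apply NNPP. intros Hno.
  apply H'. exists r. split; [exact Hr|]. intros y Hy Hd. apply Hno. exists y; auto.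
Qed.

Lemma closure_union (A B : pset) z : closure (fun y => A y \/ B y) z ->
  closure A z \/ closure B z.
Proof.
  intros C. apply NNPP. intros N. apply not_or_and in N as [NA NB].
  apply not_closure in NA as (ra & Ha & NA). apply not_closure in NB as (rb & Hb & NB).
  destruct (C (Rmin ra rb) (Rmin_glb_lt _ _ _ Ha Hb)) as (y & Hy & Hd).
  pose proof (Rmin_l ra rb). pose proof (Rmin_r ra rb). pose proof (Rmin_pos _ _ Ha Hb).
  destruct Hy as [Hy | Hy]; [apply (NA y Hy) | apply (NB y Hy)]; nra.
Qed.

Lemma not_closure_open (A : pset) : is_open (fun z => ~ closure A z).
Proof.
  intros z (r & Hr & Hz)%not_closure. exists (r / 2). split; [lra|].
  intros z' Hd C. destruct (C (r / 2) ltac:(lra)) as (y & Hy & Hd').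
  apply (Hz y Hy). pose proof (dist2_triangle2 z z' y). nra.
Qed.

Lemma closure_localize (A B : pset) z : closure A z ->
  (exists r, 0 < r /\ forall y, A y -> dist2 z y < r * r -> B y) -> closure B z.
Proof.
  intros C (r0 & H0 & HB) r Hr. pose proof (Rmin_l r r0). pose proof (Rmin_r r r0).
  destruct (C (Rmin r r0) (Rmin_pos _ _ Hr H0)) as (y & Hy & Hd).
  pose proof (Rmin_pos _ _ Hr H0). exists y. split; [apply HB; [exact Hy|] |]; nra.
Qed.

Lemma open_not_closure (U B : pset) z : is_open U -> U z ->
  (forall y, U y -> ~ B y) -> ~ closure B z.
Proof.
  intros HU Hz Hdisj C. destruct (HU z Hz) as (r & Hr & Hball).
  destruct (C r Hr) as (y & Hy & Hd). exact (Hdisj y (Hball y Hd) Hy).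
Qed.

Lemma closure_le (A : pset) (f : pt -> R) k z :
  (forall a b, (f a - f b) ^ 2 <= dist2 a b) ->
  closure A z -> (forall y, A y -> f y <= k) -> f z <= k.
Proof.
  intros Hf C H. apply Rnot_lt_le. intros Hk.
  destruct (C (f z - k) ltac:(lra)) as (y & Hy & Hd).
  pose proof (Hf z y). pose proof (H y Hy). nra.
Qed.

Lemma closure_ge (A : pset) (f : pt -> R) k z :
  (forall a b, (f a - f b) ^ 2 <= dist2 a b) ->
  closure A z -> (forall y, A y -> k <= f y) -> k <= f z.
Proof.
  intros Hf C H. apply Rnot_lt_le. intros Hk.
  destruct (C (k - f z) ltac:(lra)) as (y & Hy & Hd).
  pose proof (Hf z y). pose proof (H y Hy). nra.
Qed.

Lemma fst_lipschitz a b : (fst a - fst b) ^ 2 <= dist2 a b.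
Proof. unfold dist2. pose proof (pow2_ge_0 (snd a - snd b)). lra. Qed.

Lemma snd_lipschitz a b : (snd a - snd b) ^ 2 <= dist2 a b.
Proof. unfold dist2. pose proof (pow2_ge_0 (fst a - fst b)). lra. Qed.

Lemma closure_witness (A : pset) (P : Prop) z : closure (fun y => A y /\ P) z -> P.
Proof. intros C. destruct (C 1 ltac:(lra)) as (y & (_ & H) & _). exact H. Qed.

Lemma interior_box w c : interior w c -> exists r, 0 < r /\
  forall x y, Rabs (x - fst c) < r -> Rabs (y - snd c) < r -> w (x, y).
Proof.
  intros (r & Hr & H). exists (r / 2). split; [lra|]. intros x y Hx Hy.
  apply H, coords_lt_dist2; [exact Hr | |]; simpl; rewrite Rabs_minus_sym; lra.
Qed.

Lemma box_interior w xa xb ya yb x y :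
  (forall x' y', xa <= x' <= xb -> ya <= y' <= yb -> w (x', y')) ->
  xa < x < xb -> ya < y < yb -> interior w (x, y).
Proof.
  intros H Hx Hy.
  set (r := Rmin (Rmin (x - xa) (xb - x)) (Rmin (y - ya) (yb - y))).
  assert (Hr : 0 < r) by (unfold r; repeat apply Rmin_glb_lt; lra).
  assert (r <= x - xa /\ r <= xb - x /\ r <= y - ya /\ r <= yb - y) as (Rx1 & Rx2 & Ry1 & Ry2).
  { unfold r. pose proof (Rmin_l (x - xa) (xb - x)). pose proof (Rmin_r (x - xa) (xb - x)).
    pose proof (Rmin_l (y - ya) (yb - y)). pose proof (Rmin_r (y - ya) (yb - y)).
    pose proof (Rmin_l (Rmin (x - xa) (xb - x)) (Rmin (y - ya) (yb - y))).
    pose proof (Rmin_r (Rmin (x - xa) (xb - x)) (Rmin (y - ya) (yb - y))). lra. }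
  exists r. split; [exact Hr|]. intros q (H1%Rabs_def2 & H2%Rabs_def2)%dist2_lt_coords; [|exact Hr].
  rewrite (surjective_pairing q). simpl in *. apply H; lra.
Qed.

Lemma interior_not_minimal w z d : axis_unit d -> interior w z ->
  exists y, w y /\ dot d y < dot d z.
Proof.
  intros [_ Hd] (r & Hr & H).
  exists (fst z - r / 2 * fst d, snd z - r / 2 * snd d). split.
  - apply H. unfold dist2; simpl. nra.
  - unfold dot; simpl. nra.
Qed.

Lemma connected_separation (A W1 W2 : pset) : connected A ->
  (forall z, A z -> W1 z \/ W2 z) ->
  (forall z, W1 z -> ~ closure W2 z) -> (forall z, W2 z -> ~ closure W1 z) ->
  (exists z, A z /\ W1 z) -> (exists z, A z /\ W2 z) -> False.
Proof.
  intros Hc Hcov H12 H21 (z1 & A1 & W1z) (z2 & A2 & W2z).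
  destruct (Hc _ _ (not_closure_open W2) (not_closure_open W1)) as (z & Az & U & V).
  - intros z Az. destruct (Hcov z Az); [left; apply H12 | right; apply H21]; assumption.
  - exists z1. split; [exact A1 | apply H12, W1z].
  - exists z2. split; [exact A2 | apply H21, W2z].
  - destruct (Hcov z Az) as [W | W]; [apply V | apply U]; apply closure_self, W.
Qed.

Definition touches_extremes (w A : pset) : Prop :=
  forall d, axis_unit d -> exists m, A m /\ forall z, w z -> dot d m <= dot d z.

Section Transport.

Variable s : pt -> pt.
Hypothesis Hs : square_symmetry s.
Let invol := sym_invol s Hs.
Let isometry := sym_dist2 s Hs.

Lemma interior_comp w z : interior w (s z) -> interior (fun x => w (s x)) z.
Proof.
  intros (r & Hr & H). exists r. split; [exact Hr|].
  intros q Hq. apply H. rewrite isometry. exact Hq.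
Qed.

Lemma interior_comp_inv w z : interior (fun x => w (s x)) z -> interior w (s z).
Proof.
  intros (r & Hr & H). exists r. split; [exact Hr|].
  intros q Hq. rewrite <- (invol q). apply H. rewrite <- isometry, invol. exact Hq.
Qed.

Lemma closure_comp A z : closure A (s z) -> closure (fun x => A (s x)) z.
Proof.
  intros C r Hr. destruct (C r Hr) as (y & Hy & Hd). exists (s y).
  rewrite invol. split; [exact Hy|]. rewrite <- isometry, invol. exact Hd.
Qed.

Lemma connected_comp A : connected A -> connected (fun x => A (s x)).
Proof.
  intros Hc U V HU HV Hcov (a & Aa & Ua) (b & Ab & Vb).
  destruct (Hc (fun x => U (s x)) (fun x => V (s x))) as (z & Az & Uz & Vz).
  - intros z Hz. apply interior_comp, HU, Hz.
  - intros z Hz. apply interior_comp, HV, Hz.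
  - intros z Az. apply Hcov. rewrite invol. exact Az.
  - exists (s a). rewrite invol. auto.
  - exists (s b). rewrite invol. auto.
  - exists (s z). rewrite invol. auto.
Qed.

Lemma orthoconvex_comp w : orthoconvex w -> orthoconvex (fun x => w (s x)).
Proof.
  intros H a b Ha Hb Hab z Hz.
  exact (H _ _ Ha Hb (sym_aligned _ Hs _ _ Hab) _ (sym_seg _ Hs _ _ _ Hz)).
Qed.

Lemma touches_extremes_comp w A : touches_extremes w A ->
  touches_extremes (fun x => w (s x)) (fun x => A (s x)).
Proof.
  intros H d Hd. destruct (H (s d) (sym_axis_unit _ Hs _ Hd)) as (m & Am & Hm).
  exists (s m). rewrite invol. split; [exact Am|].
  intros z Hz. rewrite (sym_dot _ Hs d m), <- (invol z), (sym_dot _ Hs d (s z)).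
  apply Hm, Hz.
Qed.

Lemma hv_trace_comp a b z : (forall u v, s (hv_corner u v) = hv_corner (s u) (s v)) ->
  hv_trace a b z -> hv_trace (s a) (s b) (s z).
Proof.
  intros Hc [H | H]; [left | right]; rewrite <- Hc; exact (sym_seg _ Hs _ _ _ H).
Qed.

End Transport.

(** * Separation by a staircase *)

Definition spanning (w A : pset) : Prop :=
  (forall z, A z -> w z) /\ touches_extremes w A /\ connected A.

Definition blocked_pair (w : pset) (p q : pt) : Prop :=
  ~ interior w p /\ ~ interior w q /\
  (exists z, hv_trace p q z /\ interior w z) /\ (exists z, hv_trace q p z /\ interior w z).

Lemma blocked_pair_of_L_paths w p q : ~ interior w p -> ~ interior w q ->
  (forall l, shortest_rpath p q l -> at_most_one_corner p l ->
     exists x, ptrace p l x /\ interior w x) ->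
  blocked_pair w p q.
Proof.
  intros Hp Hq H. split; [exact Hp|]. split; [exact Hq|]. split.
  - destruct (H _ (hv_path_shortest p q) (hv_path_one_corner p q)) as (x & Hx & Ix).
    exists x. split; [apply ptrace_hv_path, Hx | exact Ix].
  - destruct (vh_path_exists p q) as (l & Hsh & Hone & Htr).
    destruct (H l Hsh Hone) as (x & Hx & Ix). exists x. auto.
Qed.

Lemma blocked_pair_sym w p q : blocked_pair w p q -> blocked_pair w q p.
Proof. unfold blocked_pair. tauto. Qed.

Definition above_staircase (p q : pt) : pset := fun z =>
  snd q < snd z \/ (snd p < snd z /\ fst z < fst q).
Definition below_staircase (p q : pt) : pset := fun z =>
  snd z < snd p \/ (snd z < snd q /\ fst q < fst z).
Definition left_ray (p : pt) : pset := fun z => snd z = snd p /\ fst z < fst p.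
Definition right_ray (q : pt) : pset := fun z => snd z = snd q /\ fst q < fst z.

Lemma above_staircase_open p q : is_open (above_staircase p q).
Proof.
  intros z [H | [H1 H2]].
  - exists (snd z - snd q). split; [lra|].
    intros y (_ & Hd%Rabs_def2)%dist2_lt_coords; [left; lra | lra].
  - exists (Rmin (snd z - snd p) (fst q - fst z)). split; [apply Rmin_glb_lt; lra|].
    pose proof (Rmin_l (snd z - snd p) (fst q - fst z)).
    pose proof (Rmin_r (snd z - snd p) (fst q - fst z)).
    intros y (Hx%Rabs_def2 & Hy%Rabs_def2)%dist2_lt_coords; [right; lra | apply Rmin_glb_lt; lra].
Qed.

Lemma below_staircase_open p q : is_open (below_staircase p q).
Proof.
  intros z [H | [H1 H2]].
  - exists (snd p - snd z). split; [lra|].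
    intros y (_ & Hd%Rabs_def2)%dist2_lt_coords; [left; lra | lra].
  - exists (Rmin (snd q - snd z) (fst z - fst q)). split; [apply Rmin_glb_lt; lra|].
    pose proof (Rmin_l (snd q - snd z) (fst z - fst q)).
    pose proof (Rmin_r (snd q - snd z) (fst z - fst q)).
    intros y (Hx%Rabs_def2 & Hy%Rabs_def2)%dist2_lt_coords; [right; lra | apply Rmin_glb_lt; lra].
Qed.

Lemma hv_trace_monotoneE p q z : fst p <= fst q -> snd p <= snd q ->
  hv_trace p q z <->
  (snd z = snd p /\ fst p <= fst z <= fst q) \/ (fst z = fst q /\ snd p <= snd z <= snd q).
Proof.
  intros Hx Hy. unfold hv_trace, hv_corner.
  rewrite (seg_horizontalE p (fst q, snd p) z eq_refl), (seg_verticalE (fst q, snd p) q z eq_refl).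
  unfold btw; simpl. lra.
Qed.

Lemma staircase_partition p q z : fst p < fst q -> snd p <= snd q -> ~ hv_trace p q z ->
  above_staircase p q z \/ below_staircase p q z \/ left_ray p z \/ right_ray q z.
Proof.
  unfold above_staircase, below_staircase, left_ray, right_ray.
  intros Hx Hy Hz. rewrite hv_trace_monotoneE in Hz by lra.
  destruct (Rlt_le_dec (snd q) (snd z)); [left; left; assumption|].
  destruct (Rlt_le_dec (snd z) (snd p)); [right; left; left; assumption|].
  destruct (Rlt_le_dec (fst z) (fst q)).
  - destruct (Rlt_le_dec (snd p) (snd z)); [left; right; lra|].
    destruct (Rlt_le_dec (fst z) (fst p)); [right; right; left; lra|].
    exfalso. apply Hz. left. lra.
  - destruct (Req_dec (fst z) (fst q)); [exfalso; apply Hz; right; lra|].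
    destruct (Rlt_le_dec (snd z) (snd q)); [right; left; right; lra|].
    right; right; right; lra.
Qed.

Lemma closure_left_ray (P : Prop) p z : closure (fun y => left_ray p y /\ P) z ->
  snd z = snd p /\ fst z <= fst p.
Proof.
  intros C. split; [apply Rle_antisym|].
  - apply (closure_le _ snd _ _ snd_lipschitz C). intros y [[-> _] _]. lra.
  - apply (closure_ge _ snd _ _ snd_lipschitz C). intros y [[-> _] _]. lra.
  - apply (closure_le _ fst _ _ fst_lipschitz C). intros y [[_ H] _]. lra.
Qed.

Lemma closure_right_ray (P : Prop) q z : closure (fun y => right_ray q y /\ P) z ->
  snd z = snd q /\ fst q <= fst z.
Proof.
  intros C. split; [apply Rle_antisym|].
  - apply (closure_le _ snd _ _ snd_lipschitz C). intros y [[-> _] _]. lra.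
  - apply (closure_ge _ snd _ _ snd_lipschitz C). intros y [[-> _] _]. lra.
  - apply (closure_ge _ fst _ _ fst_lipschitz C). intros y [[_ H] _]. lra.
Qed.

Lemma orthoconvex_fill w u d x1 : orthoconvex w ->
  w u -> w d -> w (x1, snd u) -> w (x1, snd d) ->
  forall x y, Rmax (fst u) (fst d) <= x <= x1 -> snd d <= y <= snd u -> w (x, y).
Proof.
  intros H Hu Hd Hu' Hd' x y Hx Hy.
  pose proof (Rmax_l (fst u) (fst d)). pose proof (Rmax_r (fst u) (fst d)).
  assert (Wu : w (x, snd u)).
  { apply (H u (x1, snd u) Hu Hu' (or_intror eq_refl)).
    apply seg_horizontalE; [reflexivity|]. split; [reflexivity|]. left; simpl; lra. }
  assert (Wd : w (x, snd d)).
  { apply (H d (x1, snd d) Hd Hd' (or_intror eq_refl)).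
    apply seg_horizontalE; [reflexivity|]. split; [reflexivity|]. left; simpl; lra. }
  apply (H _ _ Wd Wu (or_introl eq_refl)).
  apply seg_verticalE; [reflexivity|]. split; [reflexivity|]. left; simpl; lra.
Qed.

(** Otherwise orthoconvexity fills a box around [p] with points of [w]. *)
Lemma left_ray_one_sided w p x1 z1 z2 : orthoconvex w -> ~ interior w p ->
  interior w (x1, snd p) -> fst p < x1 ->
  closure (fun y => w y /\ snd p < snd y) z1 -> left_ray p z1 ->
  closure (fun y => w y /\ snd y < snd p) z2 -> left_ray p z2 -> False.
Proof.
  intros Hconv Hp Hi Hx C1 [E1 F1] C2 [E2 F2].
  destruct (interior_box w _ Hi) as (r & Hr & Hball). simpl in Hball.
  set (d0 := Rmin r (Rmin (fst p - fst z1) (fst p - fst z2))).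
  assert (Hd0 : 0 < d0) by (unfold d0; repeat apply Rmin_glb_lt; lra).
  assert (d0 <= r /\ d0 <= fst p - fst z1 /\ d0 <= fst p - fst z2) as (D1 & D2 & D3).
  { unfold d0. pose proof (Rmin_l r (Rmin (fst p - fst z1) (fst p - fst z2))).
    pose proof (Rmin_r r (Rmin (fst p - fst z1) (fst p - fst z2))).
    pose proof (Rmin_l (fst p - fst z1) (fst p - fst z2)).
    pose proof (Rmin_r (fst p - fst z1) (fst p - fst z2)). lra. }
  destruct (C1 d0 Hd0) as (u & [Hu Huy] & (Hux%Rabs_def2 & Huy'%Rabs_def2)%dist2_lt_coords);
    [|exact Hd0].
  destruct (C2 d0 Hd0) as (d & [Hd Hdy] & (Hdx%Rabs_def2 & Hdy'%Rabs_def2)%dist2_lt_coords);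
    [|exact Hd0].
  apply Hp. rewrite (surjective_pairing p).
  apply (box_interior w (Rmax (fst u) (fst d)) x1 (snd d) (snd u)).
  - apply (orthoconvex_fill w u d x1 Hconv Hu Hd);
      apply Hball; rewrite ?Rminus_diag, ?Rabs_R0; try apply Rabs_def1; lra.
  - split; [apply Rmax_lub_lt|]; lra.
  - lra.
Qed.

Lemma right_ray_one_sided w q x2 z1 z2 : orthoconvex w -> ~ interior w q ->
  interior w (x2, snd q) -> x2 < fst q ->
  closure (fun y => w y /\ snd q < snd y) z1 -> right_ray q z1 ->
  closure (fun y => w y /\ snd y < snd q) z2 -> right_ray q z2 -> False.
Proof.
  pose proof flip_x_symmetry as Hs.
  intros Hconv Hq Hi Hx C1 [E1 F1] C2 [E2 F2].
  apply (left_ray_one_sided (fun z => w (flip_x z)) (flip_x q) (- x2) (flip_x z1) (flip_x z2)).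
  - exact (orthoconvex_comp _ Hs w Hconv).
  - intros H. apply Hq. rewrite <- (sym_invol _ Hs q). exact (interior_comp_inv _ Hs w _ H).
  - apply (interior_comp _ Hs). unfold flip_x; simpl. rewrite Ropp_involutive. exact Hi.
  - simpl; lra.
  - pose proof (closure_comp _ Hs (fun y => w y /\ snd q < snd y) (flip_x z1)) as K.
    rewrite (sym_invol _ Hs) in K. exact (K C1).
  - unfold left_ray, flip_x; simpl; lra.
  - pose proof (closure_comp _ Hs (fun y => w y /\ snd y < snd q) (flip_x z2)) as K.
    rewrite (sym_invol _ Hs) in K. exact (K C2).
  - unfold left_ray, flip_x; simpl; lra.
Qed.

Section Staircase.

Variables (w A : pset) (p q i1 i2 : pt).
Hypotheses (Hconv : orthoconvex w) (Hspan : spanning w A)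
  (Hy : snd p <= snd q) (Hp : ~ interior w p) (Hq : ~ interior w q)
  (Hi1 : interior w i1) (Hi1y : snd i1 = snd p) (Hi1x : fst p <= fst i1 <= fst q)
  (Hi2 : interior w i2) (Hi2y : snd i2 = snd q) (Hi2x : fst p <= fst i2 <= fst q).

Let HAw : forall z, A z -> w z := proj1 Hspan.
Let Hext : touches_extremes w A := proj1 (proj2 Hspan).

Let upper : pset := fun y => w y /\ above_staircase p q y.
Let lower : pset := fun y => w y /\ below_staircase p q y.
Let left_low : Prop := exists z, left_ray p z /\ closure lower z.
Let right_low : Prop := exists z, right_ray q z /\ closure lower z.
(** A ray goes to the lower side as soon as [w] approaches one of its points from below;
    [left_ray_one_sided] and [right_ray_one_sided] make this a separation. *)
Let up_side : pset := fun z =>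
  upper z \/ (left_ray p z /\ ~ left_low) \/ (right_ray q z /\ ~ right_low).
Let down_side : pset := fun z =>
  lower z \/ (left_ray p z /\ left_low) \/ (right_ray q z /\ right_low).

Lemma interior_on_bottom_arm : interior w (fst i1, snd p) /\ fst p < fst i1.
Proof.
  rewrite <- Hi1y, <- surjective_pairing. split; [exact Hi1|].
  destruct (Req_dec (fst p) (fst i1)) as [E | ]; [|lra].
  exfalso. apply Hp. rewrite (pt_eq p i1 E (eq_sym Hi1y)). exact Hi1.
Qed.

Lemma interior_on_top_arm : interior w (fst i2, snd q) /\ fst i2 < fst q.
Proof.
  rewrite <- Hi2y, <- surjective_pairing. split; [exact Hi2|].
  destruct (Req_dec (fst i2) (fst q)) as [E | ]; [|lra].
  exfalso. apply Hq. rewrite (pt_eq q i2 (eq_sym E) (eq_sym Hi2y)). exact Hi2.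
Qed.

Let Hx : fst p < fst q.
Proof. pose proof (proj2 interior_on_bottom_arm). lra. Qed.

Lemma up_side_reached : exists z, A z /\ up_side z.
Proof.
  assert (Hd : axis_unit (0, -1)) by (split; simpl; lra).
  destruct (Hext _ Hd) as (m & Am & Hm).
  destruct (interior_not_minimal w i2 _ Hd Hi2) as (y & Wy & Hyi).
  exists m. split; [exact Am|]. left. split; [apply HAw, Am|]. left.
  pose proof (Hm y Wy). unfold dot in *; simpl in *. lra.
Qed.

Lemma down_side_reached : exists z, A z /\ down_side z.
Proof.
  assert (Hd : axis_unit (0, 1)) by (split; simpl; lra).
  destruct (Hext _ Hd) as (m & Am & Hm).
  destruct (interior_not_minimal w i1 _ Hd Hi1) as (y & Wy & Hyi).
  exists m. split; [exact Am|]. left. split; [apply HAw, Am|]. left.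
  pose proof (Hm y Wy). unfold dot in *; simpl in *. lra.
Qed.

Lemma up_side_apart z : up_side z -> ~ closure down_side z.
Proof.
  intros Hz C. apply closure_union in C as [C | [C | C]%closure_union].
  - destruct Hz as [[_ Hz] | [[Hz N] | [Hz N]]].
    + apply (open_not_closure _ lower _ (above_staircase_open p q) Hz); [|exact C].
      intros y Hu [_ Hd]. unfold above_staircase, below_staircase in *. lra.
    + apply N. exists z. auto.
    + apply N. exists z. auto.
  - pose proof (closure_left_ray _ _ _ C) as [E F]. pose proof (closure_witness _ _ _ C).
    unfold above_staircase, left_ray, right_ray in Hz.
    destruct Hz as [[_ Hz] | [[Hz N] | [Hz N]]]; [destruct Hz; lra | tauto | destruct Hz; lra].
  - pose proof (closure_right_ray _ _ _ C) as [E F]. pose proof (closure_witness _ _ _ C).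
    unfold above_staircase, left_ray, right_ray in Hz.
    destruct Hz as [[_ Hz] | [[Hz N] | [Hz N]]]; [destruct Hz; lra | destruct Hz; lra | tauto].
Qed.

Lemma down_side_apart z : down_side z -> ~ closure up_side z.
Proof.
  destruct interior_on_bottom_arm as [I1 X1]. destruct interior_on_top_arm as [I2 X2].
  intros Hz C. apply closure_union in C as [C | [C | C]%closure_union].
  - destruct Hz as [[_ Hz] | [[Hz (z2 & R2 & C2)] | [Hz (z2 & R2 & C2)]]].
    + apply (open_not_closure _ upper _ (below_staircase_open p q) Hz); [|exact C].
      intros y Hd [_ Hu]. unfold above_staircase, below_staircase in *. lra.
    + destruct Hz as [E F]. destruct R2 as [E2 F2].
      apply (left_ray_one_sided w p (fst i1) z z2 Hconv Hp I1 X1); [| split; assumption | |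
        split; assumption].
      * apply (closure_mono upper _ z); [|exact C].
        intros y [Wy Hu]. split; [exact Wy|]. destruct Hu; lra.
      * apply (closure_localize _ _ _ C2). exists (fst q - fst z2). split; [lra|].
        intros y [Wy Hd] (Hdx%Rabs_def2 & _)%dist2_lt_coords; [|lra].
        split; [exact Wy|]. destruct Hd; lra.
    + destruct Hz as [E F]. destruct R2 as [E2 F2].
      apply (right_ray_one_sided w q (fst i2) z z2 Hconv Hq I2 X2); [| split; assumption | |
        split; assumption].
      * apply (closure_localize _ _ _ C). exists (fst z - fst q). split; [lra|].
        intros y [Wy Hu] (Hdx%Rabs_def2 & _)%dist2_lt_coords; [|lra].
        split; [exact Wy|]. destruct Hu; lra.
      * apply (closure_mono lower _ z2); [|exact C2].
        intros y [Wy Hd]. split; [exact Wy|]. destruct Hd; lra.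
  - pose proof (closure_left_ray _ _ _ C) as [E F]. pose proof (closure_witness _ _ _ C).
    unfold below_staircase, left_ray, right_ray in Hz.
    destruct Hz as [[_ Hz] | [[Hz N] | [Hz N]]]; [destruct Hz; lra | tauto | destruct Hz; lra].
  - pose proof (closure_right_ray _ _ _ C) as [E F]. pose proof (closure_witness _ _ _ C).
    unfold below_staircase, left_ray, right_ray in Hz.
    destruct Hz as [[_ Hz] | [[Hz N] | [Hz N]]]; [destruct Hz; lra | destruct Hz; lra | tauto].
Qed.

Lemma staircase_hit : exists z, A z /\ hv_trace p q z.
Proof.
  apply NNPP. intros Hmiss.
  apply (connected_separation A up_side down_side (proj2 (proj2 Hspan)));
    [| exact up_side_apart | exact down_side_apart | exact up_side_reached
     | exact down_side_reached].
  intros z Az. assert (Wz := HAw z Az).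
  assert (Nz : ~ hv_trace p q z) by (intros Hz; apply Hmiss; exists z; auto).
  destruct (staircase_partition p q z Hx Hy Nz) as [H | [H | [H | H]]].
  - left. left. split; assumption.
  - right. left. split; assumption.
  - destruct (classic left_low); [right | left]; right; left; split; assumption.
  - destruct (classic right_low); [right | left]; right; right; split; assumption.
Qed.

End Staircase.

Lemma spanning_comp s w A : square_symmetry s -> spanning w A ->
  spanning (fun z => w (s z)) (fun z => A (s z)).
Proof.
  intros Hs (HAw & Hext & Hconn). split; [intros z; apply HAw|].
  split; [apply touches_extremes_comp | apply connected_comp]; assumption.
Qed.

Lemma hv_trace_flip_antidiag a b z : hv_trace a b z ->
  hv_trace (flip_antidiag b) (flip_antidiag a) (flip_antidiag z).
Proof.
  intros [H | H]; [right | left]; apply seg_sym.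
  all: exact (sym_seg _ flip_antidiag_symmetry _ _ _ H).
Qed.

(** The reflection [(x, y) |-> (-y, -x)] exchanges horizontal and vertical arms and maps
    [hv_trace p q] onto the [hv_trace] from the image of [q] to the image of [p]. *)
Lemma staircase_hit_vertical w A p q i1 i2 : orthoconvex w -> spanning w A ->
  fst p <= fst q -> ~ interior w p -> ~ interior w q ->
  interior w i1 -> fst i1 = fst q -> snd p <= snd i1 <= snd q ->
  interior w i2 -> fst i2 = fst p -> snd p <= snd i2 <= snd q ->
  exists z, A z /\ hv_trace p q z.
Proof.
  pose proof flip_antidiag_symmetry as Hs. pose proof (sym_invol _ Hs) as Inv.
  intros Hconv Hspan Hx Hp Hq Hi1 E1 B1 Hi2 E2 B2.
  destruct (staircase_hit (fun z => w (flip_antidiag z)) (fun z => A (flip_antidiag z))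
    (flip_antidiag q) (flip_antidiag p) (flip_antidiag i1) (flip_antidiag i2)) as (z & Az & Hz).
  - exact (orthoconvex_comp _ Hs w Hconv).
  - exact (spanning_comp _ _ _ Hs Hspan).
  - simpl; lra.
  - intros H. apply Hq. rewrite <- (Inv q). exact (interior_comp_inv _ Hs w _ H).
  - intros H. apply Hp. rewrite <- (Inv p). exact (interior_comp_inv _ Hs w _ H).
  - apply (interior_comp _ Hs). rewrite Inv. exact Hi1.
  - simpl; lra.
  - simpl; lra.
  - apply (interior_comp _ Hs). rewrite Inv. exact Hi2.
  - simpl; lra.
  - simpl; lra.
  - exists (flip_antidiag z). split; [exact Az|].
    apply hv_trace_flip_antidiag in Hz. rewrite !Inv in Hz. exact Hz.
Qed.

Lemma hv_trace_reverse_monotoneE p q z : fst p <= fst q -> snd p <= snd q ->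
  hv_trace q p z <->
  (fst z = fst p /\ snd p <= snd z <= snd q) \/ (snd z = snd q /\ fst p <= fst z <= fst q).
Proof.
  intros Hx Hy. unfold hv_trace, hv_corner.
  rewrite (seg_horizontalE q (fst p, snd q) z eq_refl), (seg_verticalE (fst p, snd q) p z eq_refl).
  unfold btw; simpl. lra.
Qed.

Lemma hv_trace_to_corner a b z : hv_trace a (hv_corner a b) z -> hv_trace a b z.
Proof. intros [H | ->%seg_degenerate]; left; [exact H | apply seg_end]. Qed.

Lemma hv_trace_from_corner a b z : hv_trace (hv_corner a b) b z -> hv_trace a b z.
Proof. intros [->%seg_degenerate | H]; [left; apply seg_end | right; exact H]. Qed.

(** With interior points on one horizontal and one vertical arm, the corner [c] decides: if it
    is interior it replaces one of them, otherwise [c] itself blocks a degenerate L. *)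
Lemma blocked_pair_meets_L_monotone w A p q : fst p <= fst q -> snd p <= snd q ->
  orthoconvex w -> spanning w A -> blocked_pair w p q -> exists z, A z /\ hv_trace p q z.
Proof.
  intros Hx Hy Hconv Hspan (Hp & Hq & (i1 & T1 & I1) & (i2 & T2 & I2)).
  rewrite hv_trace_monotoneE in T1 by assumption.
  rewrite hv_trace_reverse_monotoneE in T2 by assumption.
  set (c := hv_corner p q).
  destruct T1 as [[E1 B1] | [E1 B1]], T2 as [[E2 B2] | [E2 B2]].
  - destruct (classic (interior w c)) as [Ic | Ic].
    + apply (staircase_hit_vertical w A p q c i2); simpl; auto; lra.
    + destruct (staircase_hit w A p c i1 i1) as (z & Az & Hz); simpl; auto; try lra.
      exists z. split; [exact Az | apply hv_trace_to_corner, Hz].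
  - apply (staircase_hit w A p q i1 i2); auto; lra.
  - apply (staircase_hit_vertical w A p q i1 i2); auto; lra.
  - destruct (classic (interior w c)) as [Ic | Ic].
    + apply (staircase_hit w A p q c i2); simpl; auto; lra.
    + destruct (staircase_hit_vertical w A c q i1 i1) as (z & Az & Hz); simpl; auto; try lra.
      exists z. split; [exact Az | apply hv_trace_from_corner, Hz].
Qed.

Lemma blocked_pair_comp s w p q : square_symmetry s ->
  (forall a b, s (hv_corner a b) = hv_corner (s a) (s b)) ->
  blocked_pair w p q -> blocked_pair (fun z => w (s z)) (s p) (s q).
Proof.
  intros Hs Hc (Hp & Hq & (i1 & T1 & I1) & (i2 & T2 & I2)).
  pose proof (sym_invol _ Hs) as Inv.
  split; [|split; [|split]].
  - intros H. apply Hp. rewrite <- (Inv p). apply interior_comp_inv; assumption.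
  - intros H. apply Hq. rewrite <- (Inv q). apply interior_comp_inv; assumption.
  - exists (s i1). split; [apply hv_trace_comp; assumption|].
    apply (interior_comp _ Hs). rewrite Inv. exact I1.
  - exists (s i2). split; [apply hv_trace_comp; assumption|].
    apply (interior_comp _ Hs). rewrite Inv. exact I2.
Qed.

Lemma meets_L_by_symmetry s w A p q : square_symmetry s ->
  (forall a b, s (hv_corner a b) = hv_corner (s a) (s b)) ->
  (orthoconvex (fun z => w (s z)) -> spanning (fun z => w (s z)) (fun z => A (s z)) ->
   blocked_pair (fun z => w (s z)) (s p) (s q) -> exists z, A (s z) /\ hv_trace (s p) (s q) z) ->
  orthoconvex w -> spanning w A -> blocked_pair w p q -> exists z, A z /\ hv_trace p q z.
Proof.
  intros Hs Hc H Hconv Hspan Hb.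
  destruct (H (orthoconvex_comp _ Hs _ Hconv) (spanning_comp _ _ _ Hs Hspan)
    (blocked_pair_comp _ _ _ _ Hs Hc Hb)) as (z & Az & Hz).
  exists (s z). split; [exact Az|].
  apply (hv_trace_comp s Hs) in Hz; [|exact Hc]. rewrite !(sym_invol _ Hs) in Hz. exact Hz.
Qed.

Lemma blocked_pair_meets_L w A p q :
  orthoconvex w -> spanning w A -> blocked_pair w p q -> exists z, A z /\ hv_trace p q z.
Proof.
  assert (Hsorted : forall w A p q, fst p <= fst q -> orthoconvex w -> spanning w A ->
    blocked_pair w p q -> exists z, A z /\ hv_trace p q z).
  { intros w' A' p' q' Hx. destruct (Rle_dec (snd p') (snd q')) as [Hy | Hy].
    - apply blocked_pair_meets_L_monotone; assumption.
    - apply (meets_L_by_symmetry flip_y); [exact flip_y_symmetry | reflexivity |].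
      apply blocked_pair_meets_L_monotone; simpl; lra. }
  destruct (Rle_dec (fst p) (fst q)) as [Hx | Hx]; [apply Hsorted, Hx|].
  apply (meets_L_by_symmetry flip_x); [exact flip_x_symmetry | reflexivity |].
  apply Hsorted; simpl; lra.
Qed.

(** * Extreme edges of a rectilinear polygon *)

Lemma infimum_exists (P : R -> Prop) b : (exists s, P s) -> (forall s, P s -> b <= s) ->
  exists m, b <= m /\ (forall s, P s -> m <= s) /\
    (forall e, 0 < e -> exists s, P s /\ s < m + e).
Proof.
  intros [s1 H1] Hb.
  destruct (completeness (fun x => P (- x))) as (m & Hub & Hl).
  - exists (- b). intros x Hx. pose proof (Hb _ Hx). lra.
  - exists (- s1). rewrite Ropp_involutive. exact H1.
  - exists (- m). split; [|split].
    + enough (m <= - b) by lra. apply Hl. intros x Hx. pose proof (Hb _ Hx). lra.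
    + intros s Hs. enough (- s <= m) by lra. apply Hub. rewrite Ropp_involutive. exact Hs.
    + intros e He. apply NNPP. intros N. enough (m <= m - e) by lra.
      apply Hl. intros x Hx. apply Rnot_lt_le. intros Hlt. apply N.
      exists (- x). split; [exact Hx | lra].
Qed.

Lemma Rabs_le_bounds x M : Rabs x <= M -> - M <= x <= M.
Proof.
  intros H. pose proof (Rle_abs x). pose proof (Rle_abs (- x)). rewrite Rabs_Ropp in *. lra.
Qed.

Lemma exit_point_boundary w (ray : R -> pt) :
  (forall s s', dist2 (ray s) (ray s') = (s - s') * (s - s')) ->
  w (ray 0) -> (exists s, 0 <= s /\ ~ w (ray s)) -> exists m, 0 <= m /\ boundary w (ray m).
Proof.
  intros Hdist H0 Hexit.
  destruct (infimum_exists (fun s => 0 <= s /\ ~ w (ray s)) 0 Hexit) as (m & Hm0 & Hinf & Happ);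
    [intros s [Hs _]; exact Hs|].
  exists m. split; [exact Hm0|]. split.
  - intros r Hr. destruct (Req_dec m 0) as [-> | Hm].
    + exists (ray 0). rewrite Hdist. split; [exact H0 | nra].
    + set (s := Rmax 0 (m - r / 2)).
      assert (0 <= s /\ m - r / 2 <= s /\ s < m) as (Hs0 & Hs1 & Hs2)
        by (unfold s; split; [apply Rmax_l | split; [apply Rmax_r | apply Rmax_lub_lt; lra]]).
      exists (ray s). rewrite Hdist. split; [|nra].
      apply NNPP. intros Nw. pose proof (Hinf s (conj Hs0 Nw)). lra.
  - intros (r & Hr & Hball). destruct (Happ r Hr) as (s & [Hs Nw] & Hlt).
    pose proof (Hinf s (conj Hs Nw)). apply Nw, Hball. rewrite Hdist. nra.
Qed.

Lemma boundary_below w z d : bounded w -> w z -> fst d * fst d + snd d * snd d = 1 ->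
  exists y, boundary w y /\ dot d y <= dot d z.
Proof.
  intros [M HM] Hz Hd.
  set (ray := fun s => (fst z - s * fst d, snd z - s * snd d)).
  assert (Hdot : forall s, dot d (ray s) = dot d z - s)
    by (intros s; rewrite <- (Rmult_1_r s) at 2; rewrite <- Hd; unfold dot, ray; simpl; ring).
  assert (Hlow : forall y, w y -> - (2 * M) <= dot d y).
  { intros y Hy. destruct (HM y Hy) as [Hx%Rabs_le_bounds Hy'%Rabs_le_bounds].
    assert (-1 <= fst d <= 1 /\ -1 <= snd d <= 1) as [] by (split; split; nra).
    unfold dot. nra. }
  destruct (exit_point_boundary w ray) as (m & Hm & Bm).
  - intros s s'. rewrite <- (Rmult_1_r ((s - s') * (s - s'))), <- Hd.
    unfold dist2, ray; simpl; ring.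
  - unfold ray. rewrite !Rmult_0_l, !Rminus_0_r, <- surjective_pairing. exact Hz.
  - exists (Rabs (dot d z) + 2 * M + 1).
    pose proof (Rabs_pos (dot d z)). pose proof (Rle_abs (dot d z)).
    assert (0 <= M) by (destruct (HM z Hz) as [Hzx _]; pose proof (Rabs_pos (fst z)); lra).
    split; [lra|]. intros Hw. pose proof (Hlow _ Hw). rewrite Hdot in *. lra.
  - exists (ray m). split; [exact Bm|]. rewrite Hdot. lra.
Qed.

Lemma dot_seg_lower d m a b z : seg a b z -> m <= dot d a -> m <= dot d b -> m <= dot d z.
Proof.
  intros [t [Ht ->]] Ha Hb. unfold dot in *; simpl.
  replace (fst d * (fst a + t * (fst b - fst a)) + snd d * (snd a + t * (snd b - snd a)))
    with ((1 - t) * (fst d * fst a + snd d * snd a) + t * (fst d * fst b + snd d * snd b))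
    by ring.
  nra.
Qed.

Lemma list_argmin (f : pt -> R) (l : list pt) : l <> nil ->
  exists x, In x l /\ forall y, In y l -> f x <= f y.
Proof.
  induction l as [|a l IH]; intros Hne; [congruence|].
  destruct l as [|b l].
  - exists a. split; [left; reflexivity|]. intros y [<- | []]. lra.
  - destruct IH as (x & Hx & Hmin); [discriminate|].
    destruct (Rle_dec (f a) (f x)).
    + exists a. split; [left; reflexivity|]. intros y [<- | Hy]; [lra|].
      pose proof (Hmin y Hy). lra.
    + exists x. split; [right; exact Hx|]. intros y [<- | Hy]; [lra | apply Hmin, Hy].
Qed.

Lemma vtx_In V j : (0 < length V)%nat -> In (vtx V j) V.
Proof. intros H. apply nth_In, Nat.mod_upper_bound. lia. Qed.

Lemma obstacle_boundary_in V w z : obstacle V w -> poly_curve V z -> w z.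
Proof. intros (_ & _ & Hcl & _ & _ & Hb) Hz. apply Hcl, (proj2 (Hb z) Hz). Qed.

Lemma extreme_vertex V w d : obstacle V w -> fst d * fst d + snd d * snd d = 1 ->
  exists k, (k < length V)%nat /\ w (vtx V k) /\
    forall z, w z -> dot d (vtx V k) <= dot d z.
Proof.
  intros Ho Hd. pose proof Ho as ([Hn _] & _ & _ & Hbd & _ & Hb).
  destruct (list_argmin (dot d) V) as (x & Hx & Hmin);
    [intros E; rewrite E in Hn; simpl in Hn; lia|].
  destruct (In_nth V x (0, 0) Hx) as (k & Hk & Ek).
  assert (Vk : vtx V k = x) by (unfold vtx; rewrite Nat.mod_small; assumption).
  exists k. rewrite Vk. split; [exact Hk|]. split.
  - apply (obstacle_boundary_in V w x Ho). rewrite <- Vk.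
    exists k. split; [exact Hk | apply seg_start].
  - intros z Hz. destruct (boundary_below w z d Hbd Hz Hd) as (y & By & Hy).
    destruct (proj1 (Hb y) By) as (i & Hi & Hedge).
    pose proof (dot_seg_lower d (dot d x) _ _ _ Hedge
      (Hmin _ (vtx_In V i ltac:(lia))) (Hmin _ (vtx_In V (S i) ltac:(lia)))). lra.
Qed.

Lemma vertex_neighbours V k : (3 <= length V)%nat -> (k < length V)%nat ->
  exists a c, (a < length V)%nat /\ (c < length V)%nat /\ a <> k /\ c <> k /\ a <> c /\
    vtx V (S a) = vtx V k /\ vtx V (S k) = vtx V c.
Proof.
  unfold vtx. set (n := length V). intros Hn Hk.
  assert (Hwrap : n mod n = 0 mod n) by (rewrite Nat.Div0.mod_same, Nat.Div0.mod_0_l; reflexivity).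
  destruct k as [|k].
  - exists (n - 1)%nat, 1%nat. replace (S (n - 1)) with n by lia.
    rewrite Hwrap. repeat split; lia.
  - destruct (Nat.lt_ge_cases (S (S k)) n).
    + exists k, (S (S k)). repeat split; lia.
    + exists k, 0%nat. replace (S (S k)) with n by lia. rewrite Hwrap. repeat split; lia.
Qed.

Lemma vertex_incident_edges V k : simple_polygon V -> general_position V -> rectilinear V ->
  (k < length V)%nat ->
  (exists i, (i < length V)%nat /\ forall z, edge V i z -> fst z = fst (vtx V k)) /\
  (exists i, (i < length V)%nat /\ forall z, edge V i z -> snd z = snd (vtx V k)).
Proof.
  intros [Hn _] Hg Hr Hk.
  destruct (vertex_neighbours V k Hn Hk) as (a & c & Ha & Hc & Nak & Nck & Nac & Ea & Ec).
  assert (Vert : forall i, fst (vtx V i) = fst (vtx V (S i)) ->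
    forall z, edge V i z -> fst z = fst (vtx V i))
    by (intros i E z Hz; apply seg_verticalE in Hz; tauto).
  assert (Horiz : forall i, snd (vtx V i) = snd (vtx V (S i)) ->
    forall z, edge V i z -> snd z = snd (vtx V i))
    by (intros i E z Hz; apply seg_horizontalE in Hz; tauto).
  assert (Col : ~ collinear (vtx V a) (vtx V k) (vtx V c)) by (apply Hg; auto).
  unfold collinear in Col. rewrite <- Ec in Col.
  destruct (Hr k Hk) as [Rk | Rk], (Hr a Ha) as [Ra | Ra];
    pose proof Ra as Ra'; rewrite Ea in Ra'.
  - exfalso. apply Col. rewrite Ra', <- Rk. ring.
  - split; [exists k | exists a]; split; auto.
    intros z Hz. rewrite (Horiz a Ra z Hz). exact Ra'.
  - split; [exists a | exists k]; split; auto.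
    intros z Hz. rewrite (Vert a Ra z Hz). exact Ra'.
  - exfalso. apply Col. rewrite Ra', <- Rk. ring.
Qed.

Lemma obstacle_extremes V w : obstacle V w -> exists zl zr zb zt,
  w zl /\ w zr /\ w zb /\ w zt /\
  forall z, w z -> fst zl <= fst z <= fst zr /\ snd zb <= snd z <= snd zt.
Proof.
  intros Ho.
  destruct (extreme_vertex V w (1, 0) Ho ltac:(simpl; lra)) as (kl & _ & Wl & Ml).
  destruct (extreme_vertex V w (-1, 0) Ho ltac:(simpl; lra)) as (kr & _ & Wr & Mr).
  destruct (extreme_vertex V w (0, 1) Ho ltac:(simpl; lra)) as (kb & _ & Wb & Mb).
  destruct (extreme_vertex V w (0, -1) Ho ltac:(simpl; lra)) as (kt & _ & Wt & Mt).
  exists (vtx V kl), (vtx V kr), (vtx V kb), (vtx V kt).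
  split; [|split; [|split; [|split]]]; try assumption.
  intros z Hz. pose proof (Ml z Hz). pose proof (Mr z Hz). pose proof (Mb z Hz).
  pose proof (Mt z Hz). unfold dot in *; simpl in *. repeat split; lra.
Qed.

Lemma bbox_of_extremes w zl zr zb zt : w zl -> w zr -> w zb -> w zt ->
  (forall z, w z -> fst zl <= fst z <= fst zr /\ snd zb <= snd z <= snd zt) ->
  is_bbox w (fst zl) (fst zr) (snd zb) (snd zt).
Proof.
  intros Wl Wr Wb Wt H. split; [exact H|].
  intros xl xr yb yt Hin z Hz. pose proof (Hin _ Wl). pose proof (Hin _ Wr).
  pose proof (Hin _ Wb). pose proof (Hin _ Wt). unfold in_rect in *. lra.
Qed.

Lemma edge_on_bbox_meets V w S xl xr yb yt i : obstacle V w -> is_bbox w xl xr yb yt ->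
  (forall i, extreme_edge V w i -> exists s, In s S /\ exists x, segset s x /\ edge V i x) ->
  (i < length V)%nat ->
  (forall z, edge V i z -> fst z = xl \/ fst z = xr \/ snd z = yb \/ snd z = yt) ->
  exists x, union_segs S x /\ edge V i x.
Proof.
  intros Ho Hbox Hext Hi Hside.
  destruct (Hext i) as (s & Hs & x & Hx & Hix); [|exists x; split; [exists s|]; auto].
  split; [exact Hi|]. exists xl, xr, yb, yt. split; [exact Hbox|].
  intros z Hz. split; [|apply Hside, Hz].
  apply (proj1 Hbox), (obstacle_boundary_in V w z Ho). exists i. auto.
Qed.

Lemma obstacle_touches_extremes V w S : obstacle V w -> rectilinear V ->
  (forall i, extreme_edge V w i -> exists s, In s S /\ exists x, segset s x /\ edge V i x) ->
  touches_extremes w (union_segs S).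
Proof.
  intros Ho Hr Hext d [Hd0 Hd1]. pose proof Ho as (Hsp & Hgp & _).
  destruct (obstacle_extremes V w Ho) as (zl & zr & zb & zt & Wl & Wr & Wb & Wt & Hbounds).
  pose proof (bbox_of_extremes w zl zr zb zt Wl Wr Wb Wt Hbounds) as Hbox.
  destruct (extreme_vertex V w d Ho Hd1) as (k & Hk & Wk & Mk).
  destruct (vertex_incident_edges V k Hsp Hgp Hr Hk) as [(iv & Hiv & Ev) (ih & Hih & Eh)].
  pose proof (Hbounds _ Wk). unfold dot in Mk.
  destruct Hd0 as [Hd0 | Hd0]; rewrite Hd0 in Mk, Hd1.
  - assert (Hy : snd d = 1 \/ snd d = -1) by (destruct (Rle_dec 0 (snd d)); [left|right]; nra).
    destruct (edge_on_bbox_meets V w S _ _ _ _ ih Ho Hbox Hext Hih) as (x & Ux & Ex).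
    + intros z Hz. rewrite (Eh z Hz). right; right.
      destruct Hy as [Hy | Hy]; rewrite Hy in Mk;
        [left; pose proof (Mk _ Wb) | right; pose proof (Mk _ Wt)]; lra.
    + exists x. split; [exact Ux|]. intros z Hz. pose proof (Mk z Hz).
      unfold dot. rewrite Hd0, (Eh x Ex). lra.
  - assert (Hx : fst d = 1 \/ fst d = -1) by (destruct (Rle_dec 0 (fst d)); [left|right]; nra).
    destruct (edge_on_bbox_meets V w S _ _ _ _ iv Ho Hbox Hext Hiv) as (x & Ux & Ex).
    + intros z Hz. rewrite (Ev z Hz).
      destruct Hx as [Hx | Hx]; rewrite Hx in Mk;
        [left; pose proof (Mk _ Wl) | right; left; pose proof (Mk _ Wr)]; lra.
    + exists x. split; [exact Ux|]. intros z Hz. pose proof (Mk z Hz).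
      unfold dot. rewrite Hd0, (Ev x Ex). lra.
Qed.

Theorem lemma4 (V : list pt) (w : pset) (S : list (pt * pt)) :
  obstacle V w -> rectilinear V -> rect_convex w ->
  inside S w ->
  (forall i, extreme_edge V w i ->
     exists s, In s S /\ exists x, segset s x /\ edge V i x) ->
  connected (union_segs S) ->
  skeleton w S.
Proof.
  intros Ho Hr Hc Hin Hext Hconn. split; [exact Hin|].
  intros p q Hp Hq Hblocked l Hl Hone.
  assert (Hpq : p <> q).
  { intros <-. destruct (empty_path_shortest p) as [Hsh Hnil].
    destruct (Hblocked nil Hsh Hnil) as (x & -> & Ix). exact (Hp Ix). }
  pose proof (blocked_pair_of_L_paths w p q Hp Hq Hblocked) as Hb.
  pose proof (rect_convex_orthoconvex w Hc) as Hconv.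
  assert (Hspan : spanning w (union_segs S)).
  { split; [intros z (s & Hs & Hz); exact (Hin s z Hs Hz)|].
    split; [exact (obstacle_touches_extremes V w S Ho Hr Hext) | exact Hconn]. }
  destruct (one_corner_path_covers_L p q l Hl Hone Hpq) as [C | C].
  - destruct (blocked_pair_meets_L w _ p q Hconv Hspan Hb) as (z & (s & Hs & Hz) & Tz).
    exists s. split; [exact Hs|]. exists z. split; [apply C, Tz | exact Hz].
  - destruct (blocked_pair_meets_L w _ q p Hconv Hspan (blocked_pair_sym _ _ _ Hb))
      as (z & (s & Hs & Hz) & Tz).
    exists s. split; [exact Hs|]. exists z. split; [apply C, Tz | exact Hz].
Qed.
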